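(* Let $f:G\to H$ be a locally sectionable group homomorphism. Then $\mathrm{sec}(f)\leq \sigma_c(H)$.
   Context: For a homomorphism $f:G\to H$ and a subgroup $L\le H$, a local section of $f$ on $L$ is a homomorphism $s:L\to G$ with $f\circ s=\mathrm{incl}_L$ (the inclusion $L\hookrightarrow H$). $f$ is locally sectionable if for every $b\in H$, $b\neq 1$, there is a subgroup $L\le H$ containing $b$ on which $f$ admits a local section. The sectional number $\mathrm{sec}(f)$ is the least positive integer $m$ such that there exist proper subgroups $H_1,\ldots,H_m$ of $H$ with $H=H_1\cup\cdots\cup H_m$ and such that $f$ admits a local section on each $H_i$; $\mathrm{sec}(f)=\infty$ if no such $m$ exists. The cyclic covering number $\sigma_c(H)$ is the least positive integer $m$ such that $H$ is a union of $m$ cyclic proper subgroups; $\sigma_c(H)=\infty$ if no such $m$ exists. *)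

From HB Require Import structures.
From mathcomp Require Import all_boot.
Set Implicit Arguments. Unset Strict Implicit. Unset Printing Implicit Defensive.

Local Open Scope group_scope.

(* Arbitrary (possibly infinite) groups: mathcomp's [groupType] (monoid.v).
   Subgroups are Prop-valued subsets [L : H -> Prop]. *)

Definition is_subgroup (H : groupType) (L : H -> Prop) : Prop :=
  [/\ L 1, (forall x y, L x -> L y -> L (x * y)) & (forall x, L x -> L x^-1)].

Definition proper_subgroup (H : groupType) (L : H -> Prop) : Prop :=
  is_subgroup L /\ exists x, ~ L x.

Definition is_hom (G H : groupType) (f : G -> H) : Prop :=
  forall x y, f (x * y) = f x * f y.

Definition cyclic_subgroup (H : groupType) (L : H -> Prop) : Prop :=
  exists b : H, forall x, L x <-> exists n : nat, x = b ^+ n \/ x = (b ^+ n)^-1.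

(* s is a local section of f on the subgroup L: a homomorphism L -> G
   (given by a function defined on all of H, only its values on L matter)
   with f (s x) = x for x in L *)
Definition local_section (G H : groupType) (f : G -> H) (L : H -> Prop)
    (s : H -> G) : Prop :=
  (forall x y, L x -> L y -> s (x * y) = s x * s y) /\ (forall x, L x -> f (s x) = x).

Definition has_local_section (G H : groupType) (f : G -> H) (L : H -> Prop) :=
  exists s : H -> G, local_section f L s.

Definition locally_sectionable (G H : groupType) (f : G -> H) : Prop :=
  forall b : H, b <> 1 ->
    exists L : H -> Prop, [/\ is_subgroup L, L b & has_local_section f L].

(* H is the union of m proper subgroups H_0, ..., H_{m-1}, on each of which
   f has a local section  ("sec(f) <= m" witnesses) *)
Definition sectional_cover (G H : groupType) (f : G -> H) (m : nat) : Prop :=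
  exists Hs : nat -> H -> Prop,
    [/\ forall i, i < m -> proper_subgroup (Hs i),
        forall i, i < m -> has_local_section f (Hs i)
      & forall x : H, exists2 i, i < m & Hs i x].

(* H is the union of m cyclic proper subgroups  ("sigma_c(H) <= m" witnesses) *)
Definition cyclic_cover (H : groupType) (m : nat) : Prop :=
  exists Hs : nat -> H -> Prop,
    [/\ forall i, i < m -> proper_subgroup (Hs i),
        forall i, i < m -> cyclic_subgroup (Hs i)
      & forall x : H, exists2 i, i < m & Hs i x].

From mathcomp Require Import all_boot.

(* Each cyclic subgroup <b> of a cyclic cover already carries a local section:
   for b <> 1, restrict a local section on a subgroup containing b (which
   contains <b>); for b = 1, take the constant section 1.  So the cyclic cover
   itself is a sectional cover, and it has at least one member since 1 lies in it. *)

Set Implicit Arguments. Unset Strict Implicit. Unset Printing Implicit Defensive.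

Local Open Scope group_scope.

Lemma hom1 (G H : groupType) (f : G -> H) : is_hom f -> f 1 = 1.
Proof. by move=> homf; apply: (@mulIg _ (f 1)); rewrite -homf !mulg1 mul1g. Qed.

Lemma subgroupX (H : groupType) (L : H -> Prop) (b : H) (n : nat) :
  is_subgroup L -> L b -> L (b ^+ n).
Proof.
move=> [L1 LM _] Lb; elim: n => [|n IHn]; first by rewrite expg0.
by rewrite expgS; apply: LM.
Qed.

Lemma cyclic_subgroup_sub (H : groupType) (L C : H -> Prop) (b : H) :
  is_subgroup L -> L b ->
  (forall x, C x <-> exists n : nat, x = b ^+ n \/ x = (b ^+ n)^-1) ->
  forall x, C x -> L x.
Proof.
move=> subL Lb defC x /defC [n [-> | ->]]; first exact: subgroupX.
have [_ _ LV] := subL; apply: LV; exact: subgroupX.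
Qed.

Lemma has_local_section_sub (G H : groupType) (f : G -> H) (K L : H -> Prop) :
  (forall x, K x -> L x) -> has_local_section f L -> has_local_section f K.
Proof.
move=> sKL [s [sM sf]]; exists s; split => [x y Kx Ky | x Kx].
- by apply: sM; apply: sKL.
- by apply: sf; apply: sKL.
Qed.

Lemma has_local_section1 (G H : groupType) (f : G -> H) (K : H -> Prop) :
  is_hom f -> (forall x, K x -> x = 1) -> has_local_section f K.
Proof.
move=> homf K1; exists (fun=> 1); split => [x y _ _ | x /K1 ->].
- by rewrite mulg1.
- exact: hom1.
Qed.

Lemma cyclic_has_local_section (G H : groupType) (f : G -> H) (C : H -> Prop) :
  is_hom f -> locally_sectionable f -> cyclic_subgroup C ->
  has_local_section f C.
Proof.
move=> homf lsf [b defC]; have [b1 | nb1] := eqVneq b 1.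
  rewrite {}b1 in defC.
  by apply: has_local_section1 => // x /defC [n [-> | ->]]; rewrite expg1n ?invg1.
have [L [subL Lb secL]] := lsf b (elimN eqP nb1).
exact: has_local_section_sub (cyclic_subgroup_sub subL Lb defC) secL.
Qed.

Theorem theorem2p20 (G H : groupType) (f : G -> H) :
  is_hom f -> locally_sectionable f ->
  forall m : nat, cyclic_cover H m ->
    exists2 m' : nat, 0 < m' <= m & sectional_cover f m'.
Proof.
move=> homf lsf m [Hs [properHs cycHs coverHs]].
have [i im _] := coverHs 1.
exists m; first by rewrite leqnn andbT (leq_ltn_trans _ im).
exists Hs; split=> // j jm.
exact: cyclic_has_local_section (cycHs j jm).
Qed.
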